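(* Let $D$ be a quiver with $V(D)\neq\emptyset$, and let $L(D)$ be its loading. Define $j_{D,V} : V(D)\to V(L(D))$ by $j_{D,V}(v)=v$ and $j_{D,E} : E(D)\to E(L(D))$ by $j_{D,E}(e)=(0,e)$. Then $j_D := (j_{D,V},j_{D,E})$ is a mono-essential quiver homomorphism, and $L(D)$ equipped with $j_D$ is a mono-injective envelope of $D$ in $\mathbf{Quiv}$.
   Context: A quiver is a quadruple $(V,E,\sigma,\tau)$ with $V,E$ sets and $\sigma,\tau : E \to V$ functions (source and target). A quiver homomorphism is a pair of functions on vertices and edges commuting with sources and targets; $\mathbf{Quiv}$ is the category of quivers and these homomorphisms. A homomorphism is monic iff its vertex and edge maps are both injective. For $v,w\in V(D)$, $\mathrm{edges}_D(v,w):=\sigma_D^{-1}(v)\cap\tau_D^{-1}(w)$. The loading $L(D)$ of $D$ has vertex set $V(D)$, edge set $\{(0,e): e\in E(D)\}\cup\{(1,v,w): v,w\in V(D),\ \mathrm{edges}_D(v,w)=\emptyset\}$, with source and target $\sigma(0,e)=\sigma_D(e)$, $\tau(0,e)=\tau_D(e)$, $\sigma(1,v,w)=v$, $\tau(1,v,w)=w$. A quiver $J$ is mono-injective if for every monic $\phi: A\to B$ and every $\psi: A\to J$ there exists $\hat\psi : B\to J$ with $\hat\psi\circ\phi=\psi$. A monic $\varphi : D\to C$ is mono-essential if for every quiver $A$ and homomorphism $\alpha: C\to A$, $\alpha\circ\varphi$ monic implies $\alpha$ monic. A mono-injective envelope of $D$ is a mono-injective quiver $C$ together with a mono-essential homomorphism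 $D\to C$. *)

Set Implicit Arguments.

Record quiver := Quiver {
  qV : Type;
  qE : Type;
  qsrc : qE -> qV;
  qtgt : qE -> qV }.

Record qhom (A B : quiver) := QHom {
  hV : qV A -> qV B;
  hE : qE A -> qE B;
  hsrc : forall e, qsrc B (hE e) = hV (qsrc A e);
  htgt : forall e, qtgt B (hE e) = hV (qtgt A e) }.

Definition qcomp (A B C : quiver) (g : qhom B C) (f : qhom A B) : qhom A C.
Proof.
  refine (@QHom A C (fun v => hV g (hV f v)) (fun e => hE g (hE f e)) _ _).
  - intro e. rewrite (hsrc g), (hsrc f). reflexivity.
  - intro e. rewrite (htgt g), (htgt f). reflexivity.
Defined.

Definition injective {X Y : Type} (f : X -> Y) := forall x y, f x = f y -> x = y.

Definition monic (A B : quiver) (f : qhom A B) : Prop :=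
  injective (hV f) /\ injective (hE f).

Definition qhom_eq (A B : quiver) (f g : qhom A B) : Prop :=
  (forall v, hV f v = hV g v) /\ (forall e, hE f e = hE g e).

Definition mono_injective (J : quiver) : Prop :=
  forall (A B : quiver) (phi : qhom A B) (psi : qhom A J),
    monic phi -> exists psihat : qhom B J, qhom_eq (qcomp psihat phi) psi.

Definition mono_essential (D C : quiver) (phi : qhom D C) : Prop :=
  monic phi /\
  forall (A : quiver) (alpha : qhom C A), monic (qcomp alpha phi) -> monic alpha.

Definition mono_injective_envelope (D C : quiver) (phi : qhom D C) : Prop :=
  mono_injective C /\ mono_essential phi.

Definition no_edges (D : quiver) (v w : qV D) : Prop :=
  ~ exists e : qE D, qsrc D e = v /\ qtgt D e = w.

(* Edge set of the loading: inl e  ~ (0,e);  inr (v,w) ~ (1,v,w). *)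
Definition loading_E (D : quiver) : Type :=
  (qE D + { p : qV D * qV D | no_edges D (fst p) (snd p) })%type.

Definition loading_src (D : quiver) (x : loading_E D) : qV D :=
  match x with inl e => qsrc D e | inr p => fst (proj1_sig p) end.
Definition loading_tgt (D : quiver) (x : loading_E D) : qV D :=
  match x with inl e => qtgt D e | inr p => snd (proj1_sig p) end.

Definition loading (D : quiver) : quiver :=
  @Quiver (qV D) (loading_E D) (@loading_src D) (@loading_tgt D).

Definition jD (D : quiver) : qhom D (loading D) :=
  @QHom D (loading D) (fun v => v) (fun e => inl e)
        (fun e => eq_refl) (fun e => eq_refl).

(* A loaded quiver has an edge between any two vertices, and a quiver with
   this property and at least one vertex is mono-injective: a homomorphism
   defined on a subquiver extends by sending the new vertices to a fixed
   vertex and each new edge to some edge between the images of its endpoints.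
   The embedding j_D is mono-essential because every added edge (1,v,w) is
   the only edge from v to w, so a homomorphism that is injective on vertices
   and on the old edges cannot identify it with any other edge. *)
From Stdlib Require Import ClassicalEpsilon ProofIrrelevance.

Set Implicit Arguments.

Section ExtendAlong.

Variables (X Y Z : Type) (f : X -> Y) (g : X -> Z) (d : Y -> Z).

Definition extend_along (y : Y) : Z :=
  match excluded_middle_informative (exists x, f x = y) with
  | left Hy => g (proj1_sig (constructive_indefinite_description _ Hy))
  | right _ => d y
  end.

Lemma extend_along_ind (P : Y -> Z -> Prop) :
  (forall x, P (f x) (g x)) -> (forall y, P y (d y)) ->
  forall y, P y (extend_along y).
Proof.
  intros Pfg Pd y; unfold extend_along.
  destruct excluded_middle_informative as [Hy|_]; [|apply Pd].
  destruct (constructive_indefinite_description _ Hy) as [x <-]; apply Pfg.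
Qed.

Lemma extend_along_comp : injective f -> forall x, extend_along (f x) = g x.
Proof.
  intros f_inj x; unfold extend_along.
  destruct excluded_middle_informative as [Hy|Hy]; [|exfalso; eauto].
  destruct (constructive_indefinite_description _ Hy) as [x' Hx']; simpl.
  now rewrite (f_inj _ _ Hx').
Qed.

End ExtendAlong.

Definition complete_quiver (J : quiver) : Prop :=
  forall v w : qV J, exists e, qsrc J e = v /\ qtgt J e = w.

Lemma complete_mono_injective (J : quiver) :
  inhabited (qV J) -> complete_quiver J -> mono_injective J.
Proof.
  intros [v0] J_complete A B phi psi [phiV_inj phiE_inj].
  pose (hv := extend_along (hV phi) (hV psi) (fun _ => v0)).
  assert (hv_phi : forall a, hv (hV phi a) = hV psi a)
    by now apply extend_along_comp.
  assert (pick : forall v w, {e | qsrc J e = v /\ qtgt J e = w})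
    by (intros v w; apply constructive_indefinite_description, J_complete).
  pose (he := extend_along (hE phi) (hE psi)
                (fun f => proj1_sig (pick (hv (qsrc B f)) (hv (qtgt B f))))).
  assert (he_ends : forall f, qsrc J (he f) = hv (qsrc B f)
                              /\ qtgt J (he f) = hv (qtgt B f)).
  { apply extend_along_ind with (P := fun f e => qsrc J e = hv (qsrc B f)
                                                  /\ qtgt J e = hv (qtgt B f)).
    - intro e; rewrite (hsrc phi), (htgt phi), !hv_phi.
      split; [apply hsrc | apply htgt].
    - intro f; apply proj2_sig. }
  exists (@QHom B J hv he (fun f => proj1 (he_ends f)) (fun f => proj2 (he_ends f))).
  split; simpl; [exact hv_phi | now apply extend_along_comp].
Qed.

Lemma loading_complete (D : quiver) : complete_quiver (loading D).
Proof.
  intros v w.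
  destruct (classic (no_edges D v w)) as [Hvw|Hvw].
  - exists (inr (exist _ (v, w) Hvw)); now split.
  - apply NNPP in Hvw as [e He]; now exists (inl e).
Qed.

Lemma loading_parallel_new (D : quiver) (x : qE (loading D)) v w
    (Hvw : no_edges D v w) :
  qsrc (loading D) x = v -> qtgt (loading D) x = w ->
  x = inr (exist _ (v, w) Hvw).
Proof.
  destruct x as [e|[[v' w'] Hvw']]; simpl; intros Hs Ht.
  - exfalso; apply Hvw; now exists e.
  - subst v' w'; now rewrite (proof_irrelevance _ Hvw Hvw').
Qed.

Lemma hom_parallel (A B : quiver) (h : qhom A B) (x y : qE A) :
  injective (hV h) -> hE h x = hE h y ->
  qsrc A x = qsrc A y /\ qtgt A x = qtgt A y.
Proof.
  intros hV_inj Hxy; split; apply hV_inj;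
    [rewrite <- !(hsrc h) | rewrite <- !(htgt h)]; now f_equal.
Qed.

Lemma jD_monic (D : quiver) : monic (jD D).
Proof.
  split; intros x y Hxy; [exact Hxy | now injection Hxy].
Qed.

Lemma jD_mono_essential (D : quiver) : mono_essential (jD D).
Proof.
  split; [apply jD_monic|].
  intros A alpha [alphaV_inj alphaE_inj]; split; [exact alphaV_inj|].
  intros x y Hxy.
  destruct (hom_parallel alpha x y alphaV_inj Hxy) as [Hs Ht].
  destruct x as [e|[[v w] Hvw]], y as [e'|[[v' w'] Hvw']].
  - f_equal; exact (alphaE_inj _ _ Hxy).
  - now apply loading_parallel_new.
  - now symmetry; apply loading_parallel_new.
  - now apply loading_parallel_new.
Qed.

Theorem mainTheorem5 (D : quiver) (hne : inhabited (qV D)) :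
  mono_essential (jD D) /\ mono_injective_envelope (jD D).
Proof.
  split; [|split]; try apply jD_mono_essential.
  exact (@complete_mono_injective (loading D) hne (loading_complete D)).
Qed.
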